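(* Let $C=V^{(q)}\cap\mathcal{F}^{\otimes n}W^{(q)}$ be a CSS code on $n$ qupits, with $V,W\le\mathbb{Z}_p^n$ linear and $V^\perp\subseteq W$, and let $B\subseteq\{1,\dots,n\}$. Suppose the state $\rho$ has fidelity 1 with $C_B=V_B^{(q)}\cap\mathcal{F}^{\otimes n}W_B^{(q)}$. Then $\rho$ can be written as $\rho=\sum_i p_i|\psi_i\rangle\langle\psi_i|$ with $|\psi_i\rangle=\sum_j c_{ij}E_j|\phi_{ij}\rangle$, where each $E_j$ is a Pauli operator whose support is contained in $B$ and each $|\phi_{ij}\rangle\in C$.
   Context: A qupit is $\mathbb{C}^p$ for a prime $p$, with basis $\{|a\rangle:a\in\mathbb{Z}_p\}$. Set $\omega=e^{2\pi i/p}$, $\mathcal{F}|a\rangle=\frac1{\sqrt p}\sum_b\omega^{ab}|b\rangle$, $X|a\rangle=|a+1\rangle$ and $Z|a\rangle=\omega^a|a\rangle$. Pauli operators on $n$ qupits are the tensor products $X^{\mathbf x}Z^{\mathbf z}$, and their support is the set of positions where they act non-trivially. For a linear code $U\le\mathbb{Z}_p^n$, let $U^{(q)}=\mathrm{span}\{|\mathbf u\rangle:\mathbf u\in U\}$. For $B\subseteq\{1,\dots,n\}$, let $V_B=\{\mathbf v\in\mathbb{Z}_p^n:\exists\mathbf w\in V\text{ with }\mathrm{supp}(\mathbf v-\mathbf w)\subseteq B\}$, and define $W_B$ analogously. *)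

From HB Require Import structures.
From mathcomp Require Import all_boot all_order all_algebra all_field.
Set Implicit Arguments. Unset Strict Implicit. Unset Printing Implicit Defensive.
Import Order.TTheory GRing.Theory Num.Theory.
Local Open Scope ring_scope.

Notation lab p n := 'rV['F_p]_n.
(* Pure (unnormalised) states of n qupits: functions lab -> C (amplitudes). *)
Definition qvec (p n : nat) := lab p n -> algC.
(* Operators: matrix kernels  A x y = <x|A|y>. *)
Definition qop (p n : nat) := lab p n -> lab p n -> algC.

(* omega = e^{2 pi i / p}: p.-root (-1) is e^{i pi / p} (root of -1 with
   minimal non-negative argument), its square is e^{2 pi i / p}. *)
Definition omega (p : nat) : algC := (p.-root (-1)) ^+ 2.

Definition dotp (p n : nat) (u v : lab p n) : 'F_p := \sum_(i < n) u 0 i * v 0 i.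
Definition omexp (p : nat) (a : 'F_p) : algC := omega p ^+ (val a).

Definition ket (p n : nat) (a : lab p n) : qvec p n := fun x => (x == a)%:R.

Definition fourier_ket (p n : nat) (a : lab p n) : qvec p n :=
  fun b => (sqrtC (p%:R))^-1 ^+ n * omexp (dotp a b).

Definition apply_op (p n : nat) (A : qop p n) (psi : qvec p n) : qvec p n :=
  fun x => \sum_y A x y * psi y.

(* Pauli X^x Z^z : |a> |-> omega^{z.a} |a + x> *)
Definition pauli (p n : nat) (x z : lab p n) : qop p n :=
  fun b a => (b == a + x)%:R * omexp (dotp z a).
Definition pauli_supp (p n : nat) (x z : lab p n) : {set 'I_n} :=
  [set i | (x 0 i != 0) || (z 0 i != 0)].

Definition in_span (p n : nat) (S : pred (lab p n)) (f : lab p n -> qvec p n)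
  (psi : qvec p n) : Prop :=
  exists c : lab p n -> algC, forall y, psi y = \sum_(u | S u) c u * f u y.

Definition qcode (p n : nat) (U : pred (lab p n)) (psi : qvec p n) : Prop :=
  in_span U (@ket p n) psi.
Definition fqcode (p n : nat) (U : pred (lab p n)) (psi : qvec p n) : Prop :=
  in_span U (@fourier_ket p n) psi.

Definition css (p n : nat) (V W : pred (lab p n)) (psi : qvec p n) : Prop :=
  qcode V psi /\ fqcode W psi.

Definition extB (p n : nat) (V : {vspace lab p n}) (B : {set 'I_n}) : pred (lab p n) :=
  fun v => [exists w : lab p n, (w \in V) && [forall i, (v 0 i != w 0 i) ==> (i \in B)]].

Definition inner (p n : nat) (phi psi : qvec p n) : algC := \sum_x (phi x)^* * psi x.

Definition density (p n : nat) (rho : qop p n) : Prop :=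
  (forall psi : qvec p n, 0 <= \sum_x \sum_y (psi x)^* * rho x y * psi y) /\
  \sum_x rho x x = 1.

(* fidelity of rho with a subspace S: Tr(Pi_S rho), Pi_S = sum_k |e_k><e_k|
   for an orthonormal basis (e_k) of S (the value does not depend on the basis) *)
Definition fidelity_one (p n : nat) (S : qvec p n -> Prop) (rho : qop p n) : Prop :=
  exists (m : nat) (e : 'I_m -> qvec p n),
    (forall k, S (e k)) /\
    (forall k l, inner (e k) (e l) = (k == l)%:R) /\
    (forall psi, S psi -> exists a : 'I_m -> algC, forall x, psi x = \sum_k a k * e k x) /\
    \sum_k \sum_x \sum_y (e k x)^* * rho x y * e k y = 1.

From HB Require Import structures.
From mathcomp Require Import all_boot all_order all_algebra all_field.
From mathcomp Require Import ring.
Set Implicit Arguments. Unset Strict Implicit. Unset Printing Implicit Defensive.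
Import Order.TTheory GRing.Theory Num.Theory.
Local Open Scope ring_scope.

(* Diagonalise rho = sum_k d_k |u_k><u_k|.  Fidelity one with C_B says that
   sum_k d_k |P u_k|^2 = tr rho = sum_k d_k, where P projects onto C_B, so by Bessel's
   inequality every eigenvector of nonzero weight lies in C_B.

   A state psi of C_B has Fourier coefficients d_w supported on W_B and amplitudes supported
   on V_B.  Split the former along the cosets z + W and the latter along the translates
   x + V, with x and z supported in B: psi = sum_(x,z) X^x Z^z phi_(x,z), where
     phi_(x,z)(a) ~ [a in V] * sum_(w in W_B, w in z + W) d_w omega^(w.x) omega^((w-z).a).  It is in F W^(q) because the span of the characters
   of W is closed under products and contains [a in V], an average of the characters
   t in V^perp, which lie in W.  The normalisation is the number of ways y in V_B (resp.
   w in W_B) is hit by a translate x + V (resp. coset z + W). *)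

Section AdditiveCharacter.
Variable p : nat.
Hypothesis p_pr : prime p.

Let p_gt0 : (0 < p)%N. Proof. exact: prime_gt0. Qed.

(* omega = r^2 with r^p = -1, so r <> 1; and r <> -1 as the principal root is not negative. *)
Lemma omega_neq1 : omega p != 1.
Proof.
rewrite /omega -subr_eq0 subr_sqr_1 mulf_eq0 negb_or subr_eq0 addr_eq0.
apply/andP; split; apply: contraTneq isT => r.
  have := rootCK p_gt0 (-1 : algC); rewrite r expr1n => /eqP.
  by rewrite -addr_eq0 -mulr2n pnatr_eq0.
by have := @rootC_lt0 algC p (-1) (prime_gt1 p_pr); rewrite r oppr_lt0 ltr01.
Qed.

Lemma omega_prim : p.-primitive_root (omega p).
Proof.
have omega_p : omega p ^+ p = 1.
  by rewrite /omega -exprM mulnC exprM rootCK // sqrrN expr1n.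
have [k k_prim k_dvd] := prim_order_exists p_gt0 omega_p.
have [_ /(_ k k_dvd)] := primeP p_pr.
case/orP=> /eqP k_eq; last by rewrite k_eq in k_prim.
by move: omega_neq1 (prim_expr_order k_prim); rewrite k_eq expr1 => /eqP.
Qed.

Lemma omexp_nat k : omexp (k%:R : 'F_p) = omega p ^+ k.
Proof. by rewrite /omexp [val _](val_Fp_nat p_pr) (expr_mod _ (prim_expr_order omega_prim)). Qed.

Lemma omexpD (a b : 'F_p) : omexp (a + b) = omexp a * omexp b.
Proof. by rewrite -[a]natr_Zp -[b]natr_Zp -natrD !omexp_nat exprD. Qed.

Lemma omexp_eq1 (a : 'F_p) : (omexp a == 1) = (a == 0).
Proof.
rewrite /omexp -(prim_order_dvd omega_prim); apply/idP/eqP => [|->]; last exact: dvdn0.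
have a_lt : (val a < p)%N by rewrite -[X in (_ < X)%N](Fp_cast p_pr) ltn_ord.
by rewrite /dvdn modn_small // => /eqP a0; apply: val_inj.
Qed.

End AdditiveCharacter.

Section DotProduct.
Variables p n : nat.
Implicit Types (u v w : 'rV['F_p]_n).

Lemma dotpDl u v w : dotp (u + v) w = dotp u w + dotp v w.
Proof. by rewrite /dotp -big_split; apply: eq_bigr => i _; rewrite mxE mulrDl. Qed.

Lemma dotpC u v : dotp u v = dotp v u.
Proof. by apply: eq_bigr => i _; rewrite mulrC. Qed.

Lemma dotpDr u v w : dotp u (v + w) = dotp u v + dotp u w.
Proof. by rewrite !(dotpC u) dotpDl. Qed.

Lemma dotp0l v : dotp 0 v = 0.
Proof. by rewrite /dotp big1 // => i _; rewrite mxE mul0r. Qed.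

Lemma dotp0r v : dotp v 0 = 0.
Proof. by rewrite dotpC dotp0l. Qed.

Lemma notin_vspace_dotp (V : {vspace 'rV['F_p]_n}) a : a \notin V ->
  exists2 t, (forall v, v \in V -> dotp v t = 0) & dotp t a != 0.
Proof.
(* t is a column of the matrix of y |-> y - projv V y, which kills V but not a. *)
move=> aV; pose h y := y - projv V y.
have [j hj] : exists j, h a 0 j != 0.
  apply/existsP; apply: contraR aV => /existsPn ha0.
  have : h a = 0 by apply/rowP => j; rewrite [RHS]mxE; apply/eqP; exact: negbNE (ha0 j).
  by move/eqP; rewrite subr_eq0 => /eqP ->; apply: memv_proj.
pose t := \row_i h (delta_mx 0 i) 0 j.
have dotp_t y : dotp y t = h y 0 j.
  rewrite {2}(row_sum_delta y) /h linear_sum -sumrB summxE; apply: eq_bigr => i _.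
  by rewrite linearZ -scalerBr !mxE.
exists t => [v vV|]; last by rewrite dotpC dotp_t.
by rewrite dotp_t /h projv_id // subrr mxE.
Qed.

End DotProduct.

Section Characters.
Variables p n : nat.
Hypothesis p_pr : prime p.
Local Notation L := 'rV['F_p]_n.

Definition chi (t a : L) : algC := omexp (dotp t a).

Lemma chiDl s t a : chi (s + t) a = chi s a * chi t a.
Proof. by rewrite /chi dotpDl omexpD. Qed.

Lemma chiDr t a b : chi t (a + b) = chi t a * chi t b.
Proof. by rewrite /chi dotpDr omexpD. Qed.

Variable V : {vspace L}.

Definition perpv : pred L := fun t => [forall v, (v \in V) ==> (dotp v t == 0)].

Lemma perpvP t : reflect (forall v, v \in V -> dotp v t = 0) (perpv t).
Proof.
apply: (iffP forallP) => [t_perp v vV|t_perp v]; first exact/eqP/(implyP (t_perp v)).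
by apply/implyP => /t_perp ->.
Qed.

Lemma perpvDr s t : perpv s -> perpv (t + s) = perpv t.
Proof.
move/perpvP=> s_perp; apply/perpvP/perpvP => t_perp v vV.
  by have := t_perp v vV; rewrite dotpDr s_perp // addr0.
by rewrite dotpDr s_perp // t_perp // addr0.
Qed.

Lemma sum_chi_perpv a : \sum_(t | perpv t) chi t a = (a \in V)%:R * #|perpv|%:R.
Proof.
have [aV|aV] := boolP (a \in V).
  rewrite mul1r -sumr_const; apply: eq_bigr => t /perpvP t_perp.
  by rewrite /chi dotpC t_perp.
have [t0 /perpvP t0_perp t0a] := notin_vspace_dotp aV.
(* Translating t by t0 multiplies the sum by chi t0 a <> 1. *)
have chi_t0a : 1 != chi t0 a by rewrite eq_sym /chi omexp_eq1.
set S := \sum_(t | _) _; suff : S * (1 - chi t0 a) = 0.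
  by move/eqP; rewrite mul0r mulf_eq0 subr_eq0 (negbTE chi_t0a) orbF => /eqP.
apply/eqP; rewrite mulrBr mulr1 subr_eq0 mulr_suml {1}/S (reindex_inj (addIr t0)) /=.
by apply/eqP/eq_big => [t|t _]; rewrite ?perpvDr ?chiDl.
Qed.

Lemma indicator_vspace a :
  (a \in V)%:R = #|perpv|%:R^-1 * \sum_(t | perpv t) chi t a :> algC.
Proof.
have perpv_gt0 : (0 < #|perpv|)%N.
  by apply/card_gt0P; exists 0; apply/perpvP => v _; rewrite dotp0r.
by rewrite sum_chi_perpv mulrCA mulVf ?mulr1 // pnatr_eq0 -lt0n.
Qed.

End Characters.

Section Spans.
Variables p n : nat.
Local Notation L := 'rV['F_p]_n.
Implicit Types (S : pred L) (f : L -> qvec p n) (psi : qvec p n).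

Lemma in_span_ext S f psi psi' : psi =1 psi' -> in_span S f psi' -> in_span S f psi.
Proof. by move=> eq_psi [c psi'E]; exists c => y; rewrite eq_psi. Qed.

Lemma in_span_gen S f u : S u -> in_span S f (f u).
Proof.
move=> Su; exists (fun w => (w == u)%:R) => y.
by rewrite (bigD1 u) //= eqxx mul1r big1 ?addr0 // => w /andP[_ /negbTE->]; rewrite mul0r.
Qed.

Lemma in_span_lincomb S f (I : finType) (P : pred I) (a : I -> algC) (F : I -> qvec p n) :
  (forall i, P i -> in_span S f (F i)) ->
  in_span S f (fun y => \sum_(i | P i) a i * F i y).
Proof.
move=> F_span; have /fin_all_exists[c FE] : forall i, exists c : L -> algC,
    P i -> forall y, F i y = \sum_(w | S w) c w * f w y.
  by move=> i; have [/F_span[c ?]|] := boolP (P i); [exists c | exists (fun=> 0)].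
exists (fun w => \sum_(i | P i) a i * c i w) => y.
under eq_bigr => i Pi do rewrite FE // mulr_sumr.
by rewrite exchange_big; apply: eq_bigr => w _; rewrite mulr_suml; under eq_bigr do rewrite mulrA.
Qed.

Lemma in_span_scale S f (k : algC) psi : k != 0 ->
  in_span S (fun u y => k * f u y) psi <-> in_span S f psi.
Proof.
move=> k_neq0; split=> [[c psiE]|[c psiE]].
  by exists (fun w => c w * k) => y; rewrite psiE; under eq_bigr do rewrite mulrA.
exists (fun w => c w / k) => y; rewrite psiE; apply: eq_bigr => w _.
by rewrite mulrA divfK.
Qed.

Lemma qcode_support S psi : qcode S psi <-> forall y, ~~ S y -> psi y = 0.
Proof.
have ket_out (c : L -> algC) y : ~~ S y -> \sum_(u | S u) c u * ket u y = 0.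
  move=> Sy; rewrite big1 // => u Su; rewrite /ket.
  by case: eqP => [yu|_]; [rewrite yu Su in Sy | rewrite mulr0].
split=> [[c psiE] y Sy|psi_supp]; first by rewrite psiE ket_out.
exists psi => y; have [Sy|Sy] := boolP (S y); last by rewrite psi_supp ?ket_out.
rewrite (bigD1 y) //= /ket eqxx mulr1 big1 ?addr0 // => u /andP[_ /negbTE uy].
by rewrite eq_sym uy mulr0.
Qed.

Lemma css_lincomb S1 S2 (I : finType) (P : pred I) (a : I -> algC) (F : I -> qvec p n) psi :
  (forall i, P i -> css S1 S2 (F i)) -> (forall y, psi y = \sum_(i | P i) a i * F i y) ->
  css S1 S2 psi.
Proof.
by move=> F_css psiE; split; apply: (in_span_ext psiE); apply: in_span_lincomb => i /F_css[].
Qed.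

End Spans.

Section CharacterSpans.
Variables p n : nat.
Hypothesis p_pr : prime p.
Local Notation L := 'rV['F_p]_n.

Lemma fqcode_chi (S : pred L) psi : fqcode S psi <-> in_span S (@chi p n) psi.
Proof.
apply: in_span_scale.
by rewrite expf_neq0 // invr_eq0 sqrtC_eq0 pnatr_eq0 -lt0n prime_gt0.
Qed.

Variable W : {vspace L}.
Local Notation memW := (fun w : L => w \in W).

Lemma in_span_chiM (f g : qvec p n) :
  in_span memW (@chi p n) f -> in_span memW (@chi p n) g ->
  in_span memW (@chi p n) (fun y => f y * g y).
Proof.
move=> [c fE] [d gE].
apply: (in_span_ext (psi' := fun y => \sum_(s | s \in W) c s *
           \sum_(t | t \in W) d t * chi (s + t) y)).
  move=> y; rewrite fE gE mulr_suml; apply: eq_bigr => s _.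
  by rewrite -mulrA mulr_sumr; congr (_ * _); apply: eq_bigr => t _; rewrite chiDl // mulrCA.
apply: in_span_lincomb => s sW; apply: in_span_lincomb => t tW.
exact/in_span_gen/rpredD.
Qed.

Lemma in_span_chi_indicator (V : {vspace L}) :
  (forall t, perpv V t -> t \in W) ->
  in_span memW (@chi p n) (fun a => (a \in V)%:R).
Proof.
move=> perpvW; apply: (in_span_ext (indicator_vspace p_pr V)).
apply: (in_span_ext (psi' := fun a => \sum_(t | perpv V t) #|perpv V|%:R^-1 * chi t a)).
  by move=> a; rewrite mulr_sumr.
by apply: in_span_lincomb => t /perpvW tW; apply: in_span_gen.
Qed.

End CharacterSpans.

Section Support.
Variables (p n : nat) (B : {set 'I_n}).
Local Notation L := 'rV['F_p]_n.
Implicit Types (s x z : L).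

Definition supported (x : L) : bool := [forall i, (x 0 i != 0) ==> (i \in B)].

Lemma supportedP x : reflect (forall i, i \notin B -> x 0 i = 0) (supported x).
Proof.
apply: (iffP forallP) => [x_supp i iB|x_supp i].
  by apply/eqP; apply: contraNT iB; apply/implyP.
by apply/implyP; apply: contraR => /x_supp ->.
Qed.

Lemma supportedDr s x : supported s -> supported (x + s) = supported x.
Proof.
move/supportedP=> s_supp; apply/supportedP/supportedP => x_supp i iB.
  by have := x_supp i iB; rewrite mxE s_supp // addr0.
by rewrite mxE s_supp // x_supp // addr0.
Qed.

Lemma extBP (U : {vspace L}) v :
  reflect (exists2 w, w \in U & supported (v - w)) (extB U B v).
Proof.
apply: (iffP existsP) => [[w /andP[wU /forallP vw]]|[w wU /forallP vw]]; exists w => //.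
  by apply/forallP => i; rewrite !mxE subr_eq0; apply: vw.
by rewrite wU; apply/forallP => i; have := vw i; rewrite !mxE subr_eq0.
Qed.

Lemma pauli_supp_sub x z : supported x -> supported z -> pauli_supp x z \subset B.
Proof.
move=> /forallP x_supp /forallP z_supp; apply/subsetP => i; rewrite inE.
by case/orP=> nz; [apply: (implyP (x_supp i)) | apply: (implyP (z_supp i))].
Qed.

Lemma apply_pauli x z (phi : qvec p n) b :
  apply_op (pauli x z) phi b = chi z (b - x) * phi (b - x).
Proof.
rewrite /apply_op /pauli (bigD1 (b - x)) //= subrK eqxx mul1r big1 ?addr0 // => a ab.
by rewrite (_ : (b == a + x) = false) ?mul0r //; apply: contraNF ab => /eqP ->; rewrite addrK.
Qed.

Definition nsupported (U : {vspace L}) : algC := \sum_(x | supported x) (x \in U)%:R.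

Lemma nsupported_neq0 U : nsupported U != 0.
Proof.
have supported0 : supported 0 by apply/supportedP => i _; rewrite mxE.
by rewrite /nsupported -natr_sum pnatr_eq0 -lt0n (bigD1 0) //= mem0v.
Qed.

Lemma nsupported_shift (U : {vspace L}) y : extB U B y ->
  \sum_(x | supported x) (y - x \in U)%:R = nsupported U.
Proof.
case/extBP => w wU yw_supp; rewrite /nsupported (reindex_inj (addIr (y - w))) /=.
apply: eq_big => [x|x _]; first by rewrite supportedDr.
by rewrite opprD opprB addrCA (addrC w) addNKr addrC rpredBl.
Qed.

End Support.

Section PauliDecomposition.
Variables (p n : nat) (B : {set 'I_n}).
Hypothesis p_pr : prime p.
Local Notation L := 'rV['F_p]_n.
Variables V W : {vspace L}.
Hypothesis perpV_sub : forall t : L, (forall v, v \in V -> dotp v t = 0) -> t \in W.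

Section Components.
Variable d : L -> algC.

Definition coset_mem (z w : L) : bool := extB W B w && (w - z \in W).

Definition coset_part (z y : L) : algC :=
  \sum_(w | coset_mem z w) d w * chi w y.

Definition pauli_component (x z a : L) : algC :=
  (a \in V)%:R * \sum_(w | coset_mem z w)
     (nsupported B V * nsupported B W)^-1 * d w * chi w x * chi (w - z) a.

Lemma pauli_component_css x z :
  css (fun v => v \in V) (fun w => w \in W) (pauli_component x z).
Proof.
split.
  by apply/qcode_support => a /negbTE aV; rewrite /pauli_component aV mul0r.
apply/(fqcode_chi p_pr)/(in_span_chiM p_pr).
  by apply: in_span_chi_indicator => // t /perpvP; apply: perpV_sub.
by apply: in_span_lincomb => w /andP[_ wz]; apply: in_span_gen.
Qed.

Lemma apply_pauli_component x z y :
  apply_op (pauli x z) (pauli_component x z) y =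
  (nsupported B V * nsupported B W)^-1 * ((y - x \in V)%:R * coset_part z y).
Proof.
rewrite apply_pauli /pauli_component mulrCA [RHS]mulrCA; congr (_ * _).
rewrite /coset_part !mulr_sumr; apply: eq_bigr => w _.
have chi_w_y : chi w y = chi w x * chi (w - z) (y - x) * chi z (y - x).
  by rewrite -mulrA -chiDl // subrK -chiDr // addrC subrK.
by rewrite chi_w_y; ring.
Qed.

Lemma sum_coset_part y :
  \sum_(z | supported B z) coset_part z y =
  nsupported B W * \sum_(w | extB W B w) d w * chi w y.
Proof.
under eq_bigr do rewrite /coset_part /coset_mem big_mkcondr.
rewrite exchange_big mulr_sumr; apply: eq_bigr => w wWB.
rewrite -(nsupported_shift wWB) mulr_suml; apply: eq_bigr => z _.
by case: (_ \in W); rewrite ?mul1r ?mul0r.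
Qed.

End Components.

Lemma css_extB_pauli_decomposition (psi : qvec p n) :
  css (extB V B) (extB W B) psi ->
  exists phi : L * L -> qvec p n,
    (forall e, css (fun v => v \in V) (fun w => w \in W) (phi e)) /\
    forall y, psi y = \sum_(e | supported B e.1 && supported B e.2)
                        apply_op (pauli e.1 e.2) (phi e) y.
Proof.
case=> /qcode_support psi_out /(fqcode_chi p_pr)[d psiE].
exists (fun e => pauli_component d e.1 e.2); split=> [e|y]; first exact: pauli_component_css.
rewrite -(pair_big (supported B) (supported B)
  (fun x z => apply_op (pauli x z) (pauli_component d x z) y)) /=.
under eq_bigr do under eq_bigr do rewrite apply_pauli_component.
under eq_bigr do rewrite -2!mulr_sumr.
rewrite -mulr_sumr -mulr_suml sum_coset_part -psiE.
have [yVB|/psi_out->] := boolP (extB V B y); last by rewrite !mulr0.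
by rewrite nsupported_shift // [X in _ * X]mulrA mulKf // mulf_neq0 ?nsupported_neq0.
Qed.

End PauliDecomposition.

Section Sesquilinear.
Variable T : finType.
Implicit Types (f g : T -> algC) (A : T -> T -> algC).

Definition cdot f g : algC := \sum_x (f x)^* * g x.

Definition orthonormal (I : finType) (e : I -> T -> algC) :=
  forall k l, cdot (e k) (e l) = (k == l)%:R.

Definition qform A f g : algC := \sum_x \sum_y (f x)^* * A x y * g y.

Lemma cdot_conj f g : (cdot f g)^* = cdot g f.
Proof. by rewrite rmorph_sum; apply: eq_bigr => x _; rewrite rmorphM /= conjCK mulrC. Qed.

Lemma cdot_ge0 f : 0 <= cdot f f.
Proof. by apply: sumr_ge0 => x _; rewrite mulrC mul_conjC_ge0. Qed.

Lemma cdot_eq0 f : cdot f f = 0 -> f =1 fun=> 0.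
Proof.
move=> /eqP; rewrite psumr_eq0 => [/allP f0 x|x _]; last by rewrite mulrC mul_conjC_ge0.
by apply/eqP; rewrite -mul_conjC_eq0 mulrC; apply: f0; rewrite mem_index_enum.
Qed.

Lemma cdotBl f1 f2 g : cdot (f1 \- f2) g = cdot f1 g - cdot f2 g.
Proof. by rewrite -sumrB; apply: eq_bigr => x _; rewrite rmorphB mulrBl. Qed.

Lemma cdotBr f g1 g2 : cdot f (g1 \- g2) = cdot f g1 - cdot f g2.
Proof. by rewrite -sumrB; apply: eq_bigr => x _; rewrite mulrBr. Qed.

Lemma cdot_sumr (I : finType) (a : I -> algC) (h : I -> T -> algC) f :
  cdot f (fun x => \sum_i a i * h i x) = \sum_i a i * cdot f (h i).
Proof.
under eq_bigr do rewrite mulr_sumr; rewrite exchange_big; apply: eq_bigr => i _.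
by rewrite mulr_sumr; apply: eq_bigr => x _; rewrite mulrCA.
Qed.

Lemma cdot_suml (I : finType) (a : I -> algC) (h : I -> T -> algC) f :
  cdot (fun x => \sum_i a i * h i x) f = \sum_i (a i)^* * cdot (h i) f.
Proof.
rewrite -cdot_conj cdot_sumr rmorph_sum; apply: eq_bigr => i _.
by rewrite rmorphM /= cdot_conj.
Qed.

Section Projection.
Variables (m : nat) (e : 'I_m -> T -> algC).
Hypothesis e_on : orthonormal e.

Definition proj_on g : T -> algC := fun x => \sum_j cdot (e j) g * e j x.

Lemma cdot_proj_on j g : cdot (e j) (proj_on g) = cdot (e j) g.
Proof.
rewrite cdot_sumr (bigD1 j) //= e_on eqxx mulr1 big1 ?addr0 // => i /negbTE ij.
by rewrite e_on eq_sym ij mulr0.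
Qed.

Lemma bessel g : cdot (g \- proj_on g) (g \- proj_on g) =
  cdot g g - \sum_j (cdot (e j) g)^* * cdot (e j) g.
Proof.
have proj_l h : cdot (proj_on g) h = \sum_j (cdot (e j) g)^* * cdot (e j) h.
  by rewrite cdot_suml.
have proj_proj : cdot (proj_on g) (proj_on g) = \sum_j (cdot (e j) g)^* * cdot (e j) g.
  by rewrite proj_l; apply: eq_bigr => j _; rewrite cdot_proj_on.
rewrite !cdotBl !cdotBr proj_proj -[cdot g (proj_on g)]cdot_conj !proj_l rmorph_sum.
under eq_bigr do rewrite rmorphM /= conjCK mulrC.
by rewrite subrr subr0.
Qed.

End Projection.

Section Form.
Variable A : T -> T -> algC.

Lemma qformDl f1 f2 g : qform A (f1 \+ f2) g = qform A f1 g + qform A f2 g.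
Proof.
rewrite -big_split; apply: eq_bigr => x _; rewrite -big_split.
by apply: eq_bigr => y _; rewrite rmorphD !mulrDl.
Qed.

Lemma qformDr f g1 g2 : qform A f (g1 \+ g2) = qform A f g1 + qform A f g2.
Proof.
rewrite -big_split; apply: eq_bigr => x _; rewrite -big_split.
by apply: eq_bigr => y _; rewrite mulrDr.
Qed.

Lemma qformZl c f g : qform A (fun x => c * f x) g = c^* * qform A f g.
Proof.
rewrite mulr_sumr; apply: eq_bigr => x _; rewrite mulr_sumr.
by apply: eq_bigr => y _; rewrite rmorphM !mulrA.
Qed.

Lemma qformZr c f g : qform A f (fun x => c * g x) = c * qform A f g.
Proof.
rewrite mulr_sumr; apply: eq_bigr => x _; rewrite mulr_sumr.
by apply: eq_bigr => y _; rewrite mulrCA.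
Qed.

Lemma qform_delta x y : qform A (fun a => (a == x)%:R) (fun b => (b == y)%:R) = A x y.
Proof.
rewrite /qform (bigD1 x) //= [X in _ + X]big1 ?addr0 => [|a ax]; last first.
  by rewrite big1 // => b _; rewrite (negbTE ax) rmorph0 !mul0r.
rewrite (bigD1 y) //= [X in _ + X]big1 ?addr0 => [|b yb]; last by rewrite (negbTE yb) mulr0.
by rewrite !eqxx rmorph1 mul1r mulr1.
Qed.

Hypothesis A_psd : forall f, 0 <= qform A f f.

Lemma psd_hermitian x y : (A y x)^* = A x y.
Proof.
(* The form is real at delta_x + c delta_y; c = 1 and c = 'i determine A x y from A y x. *)
pose q c := qform A (fun a => (a == x)%:R + c * (a == y)%:R)
                    (fun a => (a == x)%:R + c * (a == y)%:R).
have qE c : q c = A x x + c * A x y + c^* * A y x + c^* * c * A y y.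
  by rewrite /q qformDl !qformDr !qformZl !qformZr !qform_delta mulrA !addrA.
have q_real c : (q c)^* = q c by apply/CrealP/ger0_real/A_psd.
have diag_real z : (A z z)^* = A z z by rewrite -qform_delta; apply/CrealP/ger0_real/A_psd.
have := q_real 1; have := q_real 'i; rewrite !qE !rmorphD !rmorphM /= !diag_real !conjCK.
rewrite conjCi conjC1 !mul1r.
set a := A x y; set b := A y x; set c := A x x; set d := A y y => e_i e_1.
have : 2%:R * 'i * (b^* - a) =
    (c + - 'i * a^* + 'i * b^* + 'i * - 'i * d) - (c + 'i * a + - 'i * b + - 'i * 'i * d)
    + 'i * ((c + a^* + b^* + d) - (c + a + b + d)) by ring.
rewrite e_i e_1 !subrr mulr0 addr0 => /eqP.
by rewrite !mulf_eq0 pnatr_eq0 (negbTE (neq0Ci _)) subr_eq0 => /eqP.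
Qed.

End Form.

Local Open Scope sesquilinear_scope.

Lemma hermitian_spectral (A : T -> T -> algC) : (forall x y, (A y x)^* = A x y) ->
  exists N (d : 'I_N -> algC) (u : 'I_N -> T -> algC),
    orthonormal u /\ forall x y, A x y = \sum_k d k * u k x * (u k y)^*.
Proof.
move=> A_herm; pose M : 'M[algC]_#|T| := \matrix_(i, j) A (enum_val i) (enum_val j).
have M_normal : M \is normalmx.
  apply/normalmxP; suff -> : M ^t* = M by [].
  by apply/matrixP => i j; rewrite !mxE A_herm.
have P_unitary : spectralmx M \is unitarymx by apply: spectral_unitarymx.
have := orthomx_spectralP M_normal; rewrite invmx_unitary // => ME.
pose u k x := (spectralmx M k (enum_rank x))^*.
exists #|T|, (fun k => spectral_diag M 0 k), u; split.
  move=> k l; have := congr1 (fun X : 'M_#|T| => X k l) (unitarymxP P_unitary).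
  rewrite !mxE => <-; rewrite (reindex _ (onW_bij _ (@enum_rank_bij T))).
  by apply: eq_bigr => x _; rewrite /u conjCK !mxE.
move=> x y; have -> : A x y = M (enum_rank x) (enum_rank y) by rewrite mxE !enum_rankK.
rewrite {1}ME mxE; apply: eq_bigr => k _.
by rewrite mul_mx_diag !mxE conjCK /u; ring.
Qed.

Section Decomposed.
Variables (A : T -> T -> algC) (N : nat) (d : 'I_N -> algC) (u : 'I_N -> T -> algC).
Hypothesis u_on : orthonormal u.
Hypothesis A_decomp : forall x y, A x y = \sum_k d k * u k x * (u k y)^*.

Lemma qform_decomp f g : qform A f g = \sum_k d k * ((cdot (u k) f)^* * cdot (u k) g).
Proof.
transitivity (\sum_x \sum_y \sum_k d k * (((f x)^* * u k x) * ((u k y)^* * g y))).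
  apply: eq_bigr => x _; apply: eq_bigr => y _.
  by rewrite A_decomp mulr_sumr mulr_suml; apply: eq_bigr => k _; ring.
under eq_bigr do rewrite exchange_big; rewrite exchange_big; apply: eq_bigr => k _.
rewrite cdot_conj /cdot big_distrlr mulr_sumr; apply: eq_bigr => x _.
by rewrite !mulr_sumr.
Qed.

Lemma trace_decomp : \sum_x A x x = \sum_k d k.
Proof.
under eq_bigr do rewrite A_decomp; rewrite exchange_big; apply: eq_bigr => k _.
have uk1 : cdot (u k) (u k) = 1 by rewrite u_on eqxx.
by rewrite -[RHS]mulr1 -uk1 mulr_sumr; apply: eq_bigr => x _; ring.
Qed.

Lemma decomp_weight k : d k = qform A (u k) (u k).
Proof.
rewrite qform_decomp (bigD1 k) //= u_on eqxx conjC1 !mulr1 big1 ?addr0 // => l /negbTE lk.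
by rewrite u_on lk mulr0 mulr0.
Qed.

End Decomposed.

Section FidelityOne.
Variables (A : T -> T -> algC) (m : nat) (e : 'I_m -> T -> algC).
Hypothesis A_psd : forall f, 0 <= qform A f f.
Hypothesis trace_A : \sum_x A x x = 1.
Hypothesis e_on : orthonormal e.
Hypothesis fidelity_A : \sum_j qform A (e j) (e j) = 1.

Lemma fidelity_one_eigvec N (d : 'I_N -> algC) (u : 'I_N -> T -> algC) :
    orthonormal u -> (forall x y, A x y = \sum_k d k * u k x * (u k y)^*) ->
  forall k, d k != 0 -> u k =1 proj_on e (u k).
Proof.
(* sum_k d_k (1 - f_k) = 0 with nonnegative terms, 1 - f_k being the squared distance
   from u_k to the span of e (Bessel). *)
move=> u_on A_decomp.
pose f k := \sum_j (cdot (e j) (u k))^* * cdot (e j) (u k).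
have residual k : cdot (u k \- proj_on e (u k)) (u k \- proj_on e (u k)) = 1 - f k.
  by rewrite bessel // u_on eqxx.
have sum_d : \sum_k d k = 1 by rewrite -(trace_decomp u_on A_decomp).
have sum_df : \sum_k d k * f k = 1.
  rewrite -fidelity_A; under [RHS]eq_bigr do rewrite (qform_decomp A_decomp).
  rewrite exchange_big; apply: eq_bigr => k _; rewrite mulr_sumr; apply: eq_bigr => j _.
  by rewrite -[cdot (u k) (e j)]cdot_conj conjCK [_^* * _]mulrC.
have sum_d_residual : \sum_k d k * (1 - f k) = 0.
  under eq_bigr do rewrite mulrBr mulr1.
  by rewrite sumrB sum_d sum_df subrr.
move=> k dk_neq0; have : d k * (1 - f k) = 0.
  apply: (psumr_eq0P _ sum_d_residual) => // l _.
  by rewrite -residual mulr_ge0 ?cdot_ge0 // (decomp_weight u_on A_decomp).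
move/eqP; rewrite mulf_eq0 (negbTE dk_neq0) -residual => /eqP/cdot_eq0 residual0 x.
by apply/eqP; rewrite -subr_eq0; apply/eqP/residual0.
Qed.

Lemma fidelity_one_ensemble :
  exists N (w : 'I_N -> algC) (psi : 'I_N -> T -> algC) (c : 'I_N -> 'I_m -> algC),
  [/\ forall i, 0 <= w i, \sum_i w i = 1, forall i, cdot (psi i) (psi i) = 1,
      forall i x, psi i x = \sum_j c i j * e j x &
      forall x y, A x y = \sum_i w i * psi i x * (psi i y)^*].
Proof.
have [j0 _|no_j] := pickP 'I_m; last first.
  by move: fidelity_A; rewrite big_pred0 // => /eqP; rewrite eq_sym oner_eq0.
have [N [d [u [u_on A_decomp]]]] := hermitian_spectral (psd_hermitian A_psd).
(* Eigenvectors of weight zero need not lie in the span of e: replace them by e j0. *)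
pose psi k := if d k == 0 then e j0 else u k.
exists N, d, psi, (fun k j => if d k == 0 then (j == j0)%:R else cdot (e j) (u k)); split.
- by move=> k; rewrite (decomp_weight u_on A_decomp).
- by rewrite -(trace_decomp u_on A_decomp).
- by move=> k; rewrite /psi; case: eqP; rewrite ?e_on ?u_on eqxx.
- move=> k x; rewrite /psi; case: eqP => [_|/eqP dk_neq0]; last exact: fidelity_one_eigvec.
  by rewrite (bigD1 j0) //= eqxx mul1r big1 ?addr0 // => j /negbTE ->; rewrite mul0r.
- move=> x y; rewrite A_decomp; apply: eq_bigr => k _; rewrite /psi.
  by case: eqP => [->|]; rewrite ?mul0r.
Qed.

End FidelityOne.

End Sesquilinear.

Theorem mainTheorem2 (p n : nat) (hp : prime p)
  (V W : {vspace 'rV['F_p]_n})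
  (hperp : forall v : 'rV['F_p]_n,
      (forall u, u \in V -> dotp u v = 0) -> v \in W)
  (B : {set 'I_n}) (rho : qop p n)
  (hrho : density rho)
  (hfid : fidelity_one (css (extB V B) (extB W B)) rho) :
  exists (k : nat) (pr : 'I_k -> algC) (psi : 'I_k -> qvec p n)
         (m : nat) (E : 'I_m -> 'rV['F_p]_n * 'rV['F_p]_n)
         (c : 'I_k -> 'I_m -> algC) (phi : 'I_k -> 'I_m -> qvec p n),
    [/\ forall i, 0 <= pr i,
        \sum_i pr i = 1,
        forall i, inner (psi i) (psi i) = 1 &
    [/\ forall j, pauli_supp (E j).1 (E j).2 \subset B,
        forall i j, css (fun u => u \in V) (fun w => w \in W) (phi i j),
        forall i x, psi i x = \sum_j c i j * apply_op (pauli (E j).1 (E j).2) (phi i j) x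
      & forall x y, rho x y = \sum_i pr i * psi i x * (psi i y)^*]].
Proof.
have [rho_psd rho_tr] := hrho.
have [m [e [e_css [e_on [_ rho_fid]]]]] := hfid.
have [N [w [psi [a [w_ge0 w_sum psi_norm psi_span rhoE]]]]] :=
  fidelity_one_ensemble rho_psd rho_tr e_on rho_fid.
have psi_css i : css (extB V B) (extB W B) (psi i).
  exact: css_lincomb (fun j _ => e_css j) (psi_span i).
have /fin_all_exists[phi phiP] := fun i => css_extB_pauli_decomposition hp hperp (psi_css i).
pose P := [pred e : 'rV['F_p]_n * 'rV['F_p]_n | supported B e.1 && supported B e.2].
exists N, w, psi, #|P|, enum_val, (fun _ _ => 1), (fun i j => phi i (enum_val j)).
split=> //; split=> // [j|i j|i x].
- by have /andP[] := enum_valP j; apply: pauli_supp_sub.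
- by have [] := phiP i.
- have [_ ->] := phiP i; rewrite (big_enum_val (A := P)).
  by apply: eq_bigr => j _; rewrite mul1r.
Qed.
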